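(* Let $Q,P\in S^2_0(\mathbb R^4)$ with $\det Q<0$, and suppose that $P=\mu Q$ for some $\mu\in\mathbb R\setminus\{0\}$ (coupled condition) and that $(\operatorname{Adj}Q)_0=\nu\,(P^2)_0$ for some $\nu\in\mathbb R$ (co-coupled condition). Then there exist $g\in\mathrm{SO}(4)$ and nonzero reals $q,p$ such that $Q=q\,gDg^T$ and $P=p\,gDg^T$, where $D=\operatorname{diag}(-3,1,1,1)$. In other words, modulo equivalence and scaling, the unique invariant nearly-Kähler structure on $S^3\times S^3$ corresponds to $(Q,P)=(q\,D,p\,D)$ with cohomology class $c=0$.
   Context: $S^2_0(\mathbb R^4)$ is the space of real symmetric trace-free $4\times4$ matrices; $X_0=X-\frac14(\operatorname{tr}X)I$; $\operatorname{Adj}$ is the adjugate. (In the paper's framework, invariant half-flat structures on $S^3\times S^3$ with $[\gamma]=0$ are encoded by commuting pairs $(Q,P)$ of such matrices with $\det Q<0$, where $P$ encodes $\omega$ and $Q$ encodes a primitive of $\gamma$; nearly-Kähler means both coupled and co-coupled, which in matrix form reads as the two conditions above.) *)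

(* Real numbers are modelled by an arbitrary real closed field
   R : rcfType (the statement is purely algebraic). *)
From HB Require Import structures.
From mathcomp Require Import all_boot all_order all_algebra.
Set Implicit Arguments. Unset Strict Implicit. Unset Printing Implicit Defensive.
Import Order.TTheory GRing.Theory Num.Theory.
Local Open Scope ring_scope.

Definition sym_tracefree {R : rcfType} (X : 'M[R]_4) : Prop :=
  X^T = X /\ \tr X = 0.

Definition tf_part {R : rcfType} (X : 'M[R]_4) : 'M[R]_4 :=
  X - ((\tr X) / 4%:R)%:M.

Definition in_SO4 {R : rcfType} (g : 'M[R]_4) : Prop :=
  g *m g^T = 1%:M /\ \det g = 1.

Definition Dmat {R : rcfType} : 'M[R]_4 :=
  \matrix_(i < 4, j < 4) (if i == j then (if i == 0 :> nat then -3%:R else 1) else 0).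

From HB Require Import structures.
From mathcomp Require Import all_boot all_order all_algebra.
From mathcomp Require Import ring lra.
Set Implicit Arguments. Unset Strict Implicit. Unset Printing Implicit Defensive.
Import Order.TTheory GRing.Theory Num.Theory.
Local Open Scope ring_scope.

(* Let Q be symmetric, trace-free, with det Q < 0.  The coupled and co-coupled
   conditions together say adj Q = kap Q^2 + c for scalars kap, c.  For a
   trace-free 4x4 matrix, Cayley-Hamilton gives adj Q = -Q^3 + (p2/2) Q + p3/3
   (p_k = tr Q^k), and Q adj Q = det Q.  Working with polynomials annihilating
   Q (the ring {poly R} is commutative, so these manipulations are plain
   polynomial identities), we find that Q is annihilated by a monic quadratic,
   and comparing with the characteristic relation forces it to be
   (X + 3a)(X - a) with a <> 0.  The spectral projector onto the eigenvalue -3a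
   is then a symmetric idempotent of trace 1, hence u u^T for a unit vector u,
   so Q = a (1 - 4 u u^T).  Finally a Householder reflection, corrected by a
   reflection fixing e_0 if needed, gives g in SO(4) sending e_0 e_0^T to
   u u^T, and D = 1 - 4 e_0 e_0^T yields Q = a g D g^T, P = mu a g D g^T. *)

Section Adjugate4.
Variable R : numFieldType.

Lemma det3 (f : nat -> nat -> R) :
  \det (\matrix_(i < 3, j < 3) f i j) =
  f 0 0 * (f 1 1 * f 2 2 - f 1 2 * f 2 1)
  - f 0 1 * (f 1 0 * f 2 2 - f 1 2 * f 2 0)
  + f 0 2 * (f 1 0 * f 2 1 - f 1 1 * f 2 0).
Proof.
rewrite (expand_det_row _ 0) !big_ord_recl big_ord0 /cofactor.
rewrite !(expand_det_row _ 0) !big_ord_recl !big_ord0 /cofactor !det_mx11 !mxE /=.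
by rewrite /bump /=; ring.
Qed.

(* The adjugate of a trace-free 4x4 matrix as a polynomial in the matrix
   (Cayley-Hamilton, with the coefficients written through Newton sums). *)
Lemma adj_tracefree4 (A : 'M[R]_4) : \tr A = 0 ->
  \adj A = - A ^+ 3 + (\tr (A ^+ 2) / 2%:R) *: A + (\tr (A ^+ 3) / 3%:R)%:M.
Proof.
pose f (a b : nat) := A (inord a) (inord b).
have eA : A = \matrix_(i < 4, j < 4) f i j.
  by apply/matrixP => i j; rewrite mxE /f !inord_val.
have -> : A ^+ 3 = A *m A *m A by rewrite !mulmxE -expr2 -exprSr.
have -> : A ^+ 2 = A *m A by rewrite mulmxE expr2.
rewrite eA /mxtrace !big_ord_recl big_ord0 !mxE /= /bump /= => tr0.
have f33 : f 3 3 = - (f 0 0 + f 1 1 + f 2 2) by rewrite -[f 3 3]subr0 -tr0 /=; ring.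
apply/matrixP => i j; rewrite !mxE /cofactor.
have -> : row' j (col' i (\matrix_(i < 4, j < 4) f i j)) =
    \matrix_(k < 3, l < 3) f (bump j k) (bump i l) by apply/matrixP => k l; rewrite !mxE.
rewrite (det3 (fun k l => f (bump j k) (bump i l))) /mxtrace.
do 4 rewrite ?big_ord_recl ?big_ord0 ?mxE.
case: i => [[|[|[|[|//]]]] Hi]; case: j => [[|[|[|[|//]]]] Hj];
  rewrite /= /bump /= ?f33; field; by rewrite ?pnatr_eq0.
Qed.
End Adjugate4.

Section Annihilators.
Variables (R : fieldType) (n : nat).
Implicit Types (Q : 'M[R]_n.+1) (p q : {poly R}).

Definition poly4 (c4 c3 c2 c1 c0 : R) : {poly R} :=
  c4%:P * 'X^4 + c3%:P * 'X^3 + c2%:P * 'X^2 + c1%:P * 'X + c0%:P.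

Definition annihilates Q p : Prop := horner_mx Q p = 0.

Lemma horner_poly4 Q c4 c3 c2 c1 c0 : horner_mx Q (poly4 c4 c3 c2 c1 c0) =
  c4 *: Q ^+ 4 + c3 *: Q ^+ 3 + c2 *: Q ^+ 2 + c1 *: Q + c0%:M.
Proof.
rewrite /poly4 !rmorphD !rmorphM /= !horner_mx_C !horner_mx_X.
by rewrite -!mulmxE !mul_scalar_mx !mulmxE !exprS expr0 !mulr1.
Qed.

Lemma mxtrace_horner_poly4 Q c4 c3 c2 c1 c0 :
  \tr (horner_mx Q (poly4 c4 c3 c2 c1 c0)) =
  c4 * \tr (Q ^+ 4) + c3 * \tr (Q ^+ 3) + c2 * \tr (Q ^+ 2) + c1 * \tr Q + c0 * n.+1%:R.
Proof. by rewrite horner_poly4 !mxtraceD !mxtraceZ mxtrace_scalar mulr_natr. Qed.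

Lemma annihilates_mull Q p q : annihilates Q q -> annihilates Q (p * q).
Proof. by rewrite /annihilates rmorphM /= => ->; rewrite mulr0. Qed.

Lemma annihilates_add Q p q :
  annihilates Q p -> annihilates Q q -> annihilates Q (p + q).
Proof. by rewrite /annihilates rmorphD /= => -> ->; rewrite addr0. Qed.

Lemma annihilates_scaleK Q (c : R) p :
  c != 0 -> annihilates Q (c%:P * p) -> annihilates Q p.
Proof.
move=> c0; rewrite /annihilates rmorphM /= horner_mx_C -mulmxE mul_scalar_mx.
by move/eqP; rewrite scaler_eq0 (negbTE c0) => /eqP.
Qed.

(* Q adj Q = det Q: if p(Q) = adj Q then X p - det Q annihilates Q. *)
Lemma annihilates_adj Q p : horner_mx Q p = \adj Q ->
  annihilates Q ('X * p - (\det Q)%:P).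
Proof.
move=> hp; rewrite /annihilates rmorphB rmorphM /= horner_mx_X horner_mx_C hp.
by rewrite -mulmxE mul_mx_adj subrr.
Qed.

Lemma poly4_monic_quadratic (c2 c1 c0 : R) : c2 != 0 ->
  poly4 0 0 c2 c1 c0 = c2%:P * poly4 0 0 1 (c1 / c2) (c0 / c2).
Proof.
move=> c20; rewrite /poly4 -{1}(divfK c20 c1) -{1}(divfK c20 c0).
by rewrite !rmorphM /=; ring.
Qed.

Lemma spectral_projector Q (r1 r2 : R) : r1 != r2 ->
  annihilates Q (('X - r1%:P) * ('X - r2%:P)) ->
  let M := (r1 - r2)^-1 *: (Q - r2%:M) in M *m M = M.
Proof.
move=> r12 hQ M; set c := (r1 - r2)^-1.
have hc : c * (r1 - r2) = 1 by rewrite mulVf // subr_eq0.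
pose m := c%:P * ('X - r2%:P).
have hM : horner_mx Q m = M.
  by rewrite rmorphM rmorphB /= !horner_mx_C horner_mx_X -mulmxE mul_scalar_mx.
have hm : m * m - m = (c ^+ 2)%:P * (('X - r1%:P) * ('X - r2%:P)).
  have -> : m * m - m = (c ^+ 2)%:P * (('X - r1%:P) * ('X - r2%:P))
      + (c * (c * (r1 - r2) - 1))%:P * ('X - r2%:P).
    by rewrite /m !rmorphM !rmorphB /= rmorph1; ring.
  by rewrite hc subrr mulr0 rmorph0 mul0r addr0.
apply/eqP; rewrite -subr_eq0 -hM mulmxE -rmorphM -rmorphB /= hm.
by rewrite (annihilates_mull _ hQ).
Qed.
End Annihilators.

Section TraceFree.
Variables (R : numFieldType) (n : nat).
Implicit Types Q : 'M[R]_n.+1.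

Lemma nonzero_of_det Q : \det Q != 0 -> Q != 0.
Proof. by apply: contraNneq => ->; rewrite det0. Qed.

(* A nonzero trace-free matrix is not scalar: no nonzero linear polynomial
   annihilates it. *)
Lemma annihilates_linear Q (c1 c0 : R) : \tr Q = 0 -> Q != 0 ->
  annihilates Q (poly4 0 0 0 c1 c0) -> c1 = 0 /\ c0 = 0.
Proof.
move=> trQ Q0 hc.
have /eqP : c0 * n.+1%:R = 0.
  by move: (congr1 mxtrace hc); rewrite mxtrace_horner_poly4 trQ mxtrace0 => <-; ring.
rewrite mulf_eq0 pnatr_eq0 orbF => /eqP c00; split=> //.
move: hc; rewrite /annihilates horner_poly4 c00 raddf0 !scale0r !add0r addr0.
by move/eqP; rewrite scaler_eq0 (negbTE Q0) orbF => /eqP.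
Qed.
End TraceFree.

Section QuadraticAnnihilator.
Variable R : numFieldType.
Implicit Types Q : 'M[R]_4.

Definition adj_poly Q : {poly R} :=
  poly4 0 (-1) 0 (\tr (Q ^+ 2) / 2%:R) (\tr (Q ^+ 3) / 3%:R).

Lemma horner_adj_poly Q : \tr Q = 0 -> horner_mx Q (adj_poly Q) = \adj Q.
Proof.
by move=> trQ; rewrite horner_poly4 adj_tracefree4 // !scale0r add0r addr0 scaleN1r.
Qed.

(* If adj Q is a combination of Q^2 and 1, then Q satisfies a monic quadratic:
   combine adj_poly(X) - kap X^2 - c with kap X^3 + c X - det Q. *)
Lemma quadratic_annihilator Q (kap c : R) :
  \tr Q = 0 -> \det Q != 0 -> \adj Q = kap *: Q ^+ 2 + c%:M ->
  exists b e : R, annihilates Q (poly4 0 0 1 b e).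
Proof.
move=> trQ dQ hadj; have Q0 := nonzero_of_det dQ.
set d := \det Q in dQ.
have kq : horner_mx Q (poly4 0 0 kap 0 c) = \adj Q.
  by rewrite horner_poly4 hadj !scale0r !add0r addr0.
have cubic : annihilates Q (poly4 0 kap 0 c (- d)).
  by have := annihilates_adj kq; rewrite /poly4 !rmorph0 -/d; congr annihilates; ring.
have diff : annihilates Q (adj_poly Q - poly4 0 0 kap 0 c).
  by rewrite /annihilates rmorphB /= horner_adj_poly // kq subrr.
have kap0 : kap != 0.
  apply: contra_neq dQ => k0; move: cubic; rewrite k0 => /(annihilates_linear trQ Q0).
  by case=> _ /eqP; rewrite oppr_eq0 => /eqP.
have k2 : - kap ^+ 2 != 0 by rewrite oppr_eq0 sqrf_eq0.
set u1 := kap * (\tr (Q ^+ 2) / 2%:R) + c.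
set u0 := kap * (\tr (Q ^+ 3) / 3%:R - c) - d.
exists (u1 / - kap ^+ 2), (u0 / - kap ^+ 2).
apply: (annihilates_scaleK k2); rewrite -poly4_monic_quadratic //.
have -> : poly4 0 0 (- kap ^+ 2) u1 u0 =
    kap%:P * (adj_poly Q - poly4 0 0 kap 0 c) + poly4 0 kap 0 c (- d).
  by rewrite /adj_poly /poly4 /u1 /u0 !rmorphD; ring.
by apply: annihilates_add => //; apply: annihilates_mull.
Qed.
End QuadraticAnnihilator.

Section Roots.
Variable R : realFieldType.
Implicit Types Q : 'M[R]_4.

(* Constraints on a monic quadratic X^2 + b X + e annihilating a nonzero
   trace-free Q: its traces give p2 = -4e and p3 = 4be, and reducing the
   characteristic relation X adj_poly(X) - det Q modulo it leaves a linear
   polynomial, whose coefficients must vanish. *)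
Lemma quadratic_annihilator_coeffs Q (b e : R) :
  \tr Q = 0 -> Q != 0 -> annihilates Q (poly4 0 0 1 b e) ->
  b * (3%:R * b ^+ 2 + 4%:R * e) = 0 /\ \det Q = e * (b ^+ 2 + e).
Proof.
move=> trQ Q0 hq.
set p2 := \tr (Q ^+ 2); set p3 := \tr (Q ^+ 3); set d := \det Q.
have tr2 : p2 + e * 4%:R = 0.
  by move: (congr1 mxtrace hq); rewrite mxtrace_horner_poly4 trQ mxtrace0 => <-; ring.
have tr3 : p3 + b * p2 = 0.
  have hc : annihilates Q (poly4 0 1 b e 0).
    have -> : poly4 0 1 b e 0 = 'X * poly4 0 0 1 b e by rewrite /poly4 !rmorph0 rmorph1; ring.
    exact: annihilates_mull.
  by move: (congr1 mxtrace hc); rewrite mxtrace_horner_poly4 trQ mxtrace0 => <-; ring.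
set r := b ^+ 2 - e - p2 / 2%:R.
have [e1 e0] : p3 / 3%:R + b * r - b * e = 0 /\ - d + e * r = 0.
  apply: (annihilates_linear trQ Q0).
  have -> : poly4 0 0 0 (p3 / 3%:R + b * r - b * e) (- d + e * r) =
      ('X * adj_poly Q - d%:P) + ('X ^+ 2 - b%:P * 'X + r%:P) * poly4 0 0 1 b e.
    by rewrite /adj_poly /poly4 !rmorphD !rmorphM !rmorphB !rmorphN /=; ring.
  apply: annihilates_add; last exact: annihilates_mull.
  exact/annihilates_adj/horner_adj_poly.
have hp2 : p2 = - (4%:R * e) by lra.
have hp3 : p3 = 4%:R * b * e by rewrite hp2 in tr3; nra.
split; last by rewrite /r hp2 in e0; nra.
by rewrite -(mulr0 3%:R) -e1 /r hp2 hp3; field.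
Qed.

Lemma quadratic_annihilator_roots Q (b e : R) :
  \tr Q = 0 -> \det Q < 0 -> annihilates Q (poly4 0 0 1 b e) ->
  exists a : R, a != 0 /\ annihilates Q (('X - (- (3%:R * a))%:P) * ('X - a%:P)).
Proof.
move=> trQ dQ hq; have Q0 : Q != 0 by apply: nonzero_of_det; rewrite ltr0_neq0.
have [hb hd] := quadratic_annihilator_coeffs trQ Q0 hq.
have b0 : b != 0.
  apply: contraTneq dQ => b0; rewrite hd b0 expr0n /= add0r -leNgt.
  exact: sqr_ge0.
have he : e = - (3%:R * (b / 2%:R) ^+ 2).
  have /eqP : 3%:R * b ^+ 2 + 4%:R * e = 0.
    by move/eqP: hb; rewrite mulf_eq0 (negbTE b0) => /eqP.
  by rewrite addr_eq0 => /eqP h; apply/(mulfI (_ : 4%:R != 0)); rewrite ?pnatr_eq0 //; lra.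
pose a := b / 2%:R.
have eb : b = 2%:R * a by rewrite /a; field.
exists a; split; first by rewrite /a mulf_neq0 // invr_eq0 pnatr_eq0.
move: hq; rewrite he -/a; clearbody a; rewrite eb; congr annihilates.
by rewrite /poly4 !rmorph0 rmorph1 !rmorphM !rmorphN /=; ring.
Qed.
End Roots.

Section RankOneProjector.
Variables (R : rcfType) (n : nat).
Implicit Types M K : 'M[R]_n.

(* A symmetric idempotent of trace 0 vanishes: tr K = tr (K K^T) is the sum
   of the squares of its entries. *)
Lemma sym_idem_tr0 K : K^T = K -> K *m K = K -> \tr K = 0 -> K = 0.
Proof.
move=> KT KK trK.
have sK i k : K k i = K i k by rewrite -[in LHS]KT mxE.
have sq : \sum_i \sum_k K i k ^+ 2 = \tr (K *m K).
  rewrite /mxtrace; apply: eq_bigr => i _; rewrite mxE.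
  by apply: eq_bigr => k _; rewrite sK expr2.
rewrite KK trK in sq.
have row0 := psumr_eq0P (fun i _ => sumr_ge0 _ (fun k _ => sqr_ge0 (K i k))) sq.
apply/matrixP => i k; rewrite mxE.
have := psumr_eq0P (fun k _ => sqr_ge0 (K i k)) (row0 i isT).
by move=> /(_ k isT) /eqP; rewrite sqrf_eq0 => /eqP.
Qed.

Lemma exists_pos_diag M : \tr M = 1 -> exists j, 0 < M j j.
Proof.
move=> trM; case: (pickP (fun j => 0 < M j j)) => [j hj|h]; first by exists j.
suff : \tr M <= 0 by rewrite trM ler10.
by apply: sumr_le0 => j _; rewrite leNgt h.
Qed.

(* An orthogonal projector of trace 1 is u u^T for a unit vector u: take u a
   normalised nonzero column of M; then M - u u^T is a trace-free projector. *)
Lemma rank_one_projector M : M^T = M -> M *m M = M -> \tr M = 1 ->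
  exists u : 'cV[R]_n, M = u *m u^T /\ u^T *m u = 1%:M.
Proof.
move=> MT MM trM; have [j hj] := exists_pos_diag trM.
pose s := Num.sqrt (M j j).
have s0 : 0 < s by rewrite sqrtr_gt0.
have ss : s ^+ 2 = M j j by rewrite sqr_sqrtr // ltW.
pose u := s^-1 *: col j M.
have Mu : M *m u = u by rewrite /u -scalemxAr colE mulmxA MM.
have uM : u^T *m M = u^T by rewrite -{1}MT -trmx_mul Mu.
have uu : u^T *m u = 1%:M.
  apply/matrixP => a b; rewrite !ord1 !mxE /=.
  have Mjj : \sum_k M j k * M k j = M j j by rewrite -{3}MM mxE.
  rewrite (eq_bigr (fun k => s^-1 * s^-1 * (M j k * M k j))); last first.
    by move=> k _; rewrite !mxE -{1}MT mxE; ring.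
  by rewrite -mulr_sumr Mjj -ss; field; rewrite gt_eqF.
exists u; split => //; apply/eqP; rewrite -subr_eq0; apply/eqP/sym_idem_tr0.
- by rewrite linearB /= MT trmx_mul trmxK.
- rewrite mulmxBl !mulmxBr MM mulmxA Mu -!mulmxA uM !mulmxA.
  by rewrite -[u *m u^T *m u]mulmxA uu mulmx1 subrr subr0.
- by rewrite linearB /= trM mxtrace_mulC uu mxtrace1 subrr.
Qed.
End RankOneProjector.

Section Householder.
Variables (R : rcfType) (n : nat).
Local Notation e0 := (delta_mx 0 0 : 'cV[R]_n.+1).

Lemma dot_e0 (x : 'cV[R]_n.+1) : x^T *m e0 = (x 0 0)%:M.
Proof. by rewrite -colE; apply/matrixP => a b; rewrite !ord1 !mxE eqxx mulr1n. Qed.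

Lemma e0_dot (x : 'cV[R]_n.+1) : e0^T *m x = (x 0 0)%:M.
Proof. by rewrite -[e0^T *m x]trmxK trmx_mul trmxK dot_e0 tr_scalar_mx. Qed.

(* The Householder reflection H = 1 - 2 w w^T / |w|^2, w = u -+ e_0 (sign
   chosen so that |w| > 0), is orthogonal and maps e_0 to +-u. *)
Lemma householder (u : 'cV[R]_n.+1) : u^T *m u = 1%:M ->
  exists H : 'M[R]_n.+1, H *m H^T = 1%:M /\ H *m delta_mx 0 0 *m H^T = u *m u^T.
Proof.
move=> uu.
pose sg : R := if 0 <= u 0 0 then -1 else 1.
have sg2 : sg * sg = 1 by rewrite /sg; case: ifP => _; rewrite ?mulrNN mulr1.
have sgu : sg * u 0 0 <= 0.
  rewrite /sg; case: ifP => h; first by rewrite mulN1r oppr_le0.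
  by rewrite mul1r; move/negbT: h; rewrite -ltNge => /ltW.
have sgE : sg = 1 \/ sg = -1 by rewrite /sg; case: ifP; [right|left].
clearbody sg.
pose w := u - sg *: e0.
pose nw : R := 1 - 2%:R * sg * u 0 0 + sg * sg.
have ww : w^T *m w = nw%:M.
  have -> : w^T = u^T - sg *: e0^T by rewrite /w linearB linearZ.
  rewrite /w mulmxBl !mulmxBr -!scalemxAl -!scalemxAr uu dot_e0 e0_dot dot_e0 mxE eqxx.
  by apply/matrixP => i j; rewrite !ord1 !mxE !eqxx /= /nw; ring.
have nw0 : 0 < nw by rewrite /nw sg2; lra.
pose c : R := 2%:R / nw.
pose W := w *m w^T.
have WW : W *m W = nw *: W.
  by rewrite /W mulmxA -[w *m w^T *m w]mulmxA ww mul_mx_scalar -scalemxAl.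
pose H := 1%:M - c *: W.
have HT : H^T = H by rewrite /H linearB linearZ /= trmx1 /W trmx_mul trmxK.
have HH : H *m H = 1%:M.
  rewrite /H mulmxBl mul1mx mulmxBr mulmx1 -scalemxAl -scalemxAr WW.
  have hc x : c * (c * (nw * x)) = 2%:R * c * x by rewrite /c; field; rewrite gt_eqF.
  by apply/matrixP => i j; rewrite !mxE hc; ring.
have cw : c * (u 0 0 - sg) = - sg.
  rewrite /c mulrAC; apply: (mulIf (_ : nw != 0)); first by rewrite gt_eqF.
  by rewrite divfK ?gt_eqF // /nw; case: sgE => ->; ring.
have He0 : H *m e0 = sg *: u.
  rewrite /H mulmxBl mul1mx -scalemxAl /W -mulmxA dot_e0 mul_mx_scalar.
  apply/matrixP => i j; rewrite !ord1 !mxE eqxx /= mulr1n !mulr1 mulrA cw.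
  by case: sgE => ->; case: (i == 0); rewrite /= ?mulr1n ?mulr0n; ring.
exists H; split; first by rewrite HT HH.
have -> : (delta_mx 0 0 : 'M[R]_n.+1) = e0 *m e0^T by rewrite trmx_delta mul_delta_mx.
rewrite mulmxA He0 -mulmxA -trmx_mul He0 linearZ /= -scalemxAl -scalemxAr scalerA sg2.
by rewrite scale1r.
Qed.
End Householder.

Section Rotation.
Variables (R : rcfType) (n : nat).

Lemma reflection_fixing_e0 : exists F : 'M[R]_n.+2,
  [/\ F *m F^T = 1%:M, \det F = -1 & F *m delta_mx 0 0 *m F^T = delta_mx 0 0].
Proof.
pose d : 'rV[R]_n.+2 := \row_i (if i == ord_max then -1 else 1).
exists (diag_mx d); split.
- rewrite tr_diag_mx mulmx_diag; apply/matrixP => i j; rewrite !mxE.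
  by case: ifP => _; rewrite ?mulrNN mulr1.
- rewrite det_diag big_ord_recr /= big1 ?mul1r; first by rewrite mxE eqxx.
  by move=> i _; rewrite mxE -val_eqE /= ltn_eqF.
- rewrite tr_diag_mx mul_diag_mx mul_mx_diag; apply/matrixP => i j; rewrite !mxE.
  have [-> | _] := eqVneq i 0; last by rewrite /= mulr0 mul0r.
  have [-> | _] := eqVneq j 0; last by rewrite andbF mulr0 mul0r.
  by rewrite /= mulr1 mul1r.
Qed.

Lemma rotation_to_axis (u : 'cV[R]_n.+2) : u^T *m u = 1%:M ->
  exists g : 'M[R]_n.+2, [/\ g *m g^T = 1%:M, \det g = 1 &
    g *m delta_mx 0 0 *m g^T = u *m u^T].
Proof.
move=> uu; have [H [HH He0]] := householder uu.
have /eqP : \det H ^+ 2 = 1.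
  by have := congr1 determinant HH; rewrite det_mulmx det_tr det1 expr2.
rewrite sqrf_eq1 => /orP [/eqP dH | /eqP dH]; first by exists H.
have [F [FF dF Fe0]] := reflection_fixing_e0.
exists (H *m F); split.
- by rewrite trmx_mul mulmxA -[H *m F *m F^T]mulmxA FF mulmx1.
- by rewrite det_mulmx dH dF mulrNN mulr1.
- by rewrite trmx_mul !mulmxA -[H *m F *m _]mulmxA -[H *m (F *m _) *m _]mulmxA Fe0.
Qed.
End Rotation.

Section NearlyKaehler.
Variable R : rcfType.
Implicit Types Q X Y : 'M[R]_4.

Lemma tf_part_eq X Y (nu : R) : tf_part X = nu *: tf_part Y ->
  X = nu *: Y + ((\tr X - nu * \tr Y) / 4%:R)%:M.
Proof.
rewrite /tf_part => h; apply/matrixP => i j; move/matrixP/(_ i j): h.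
by rewrite !mxE; case: (i == j); rewrite /= ?mulr1n ?mulr0n => h; lra.
Qed.

Lemma cocoupled_adj Q (mu nu : R) :
  tf_part (\adj Q) = nu *: tf_part ((mu *: Q) *m (mu *: Q)) ->
  exists c : R, \adj Q = (nu * mu ^+ 2) *: Q ^+ 2 + c%:M.
Proof.
move/tf_part_eq => ->; eexists; congr (_ + _).
by rewrite -scalemxAl -scalemxAr !scalerA mulmxE -expr2 mulrA.
Qed.

Lemma two_eigenvalue_form Q (a : R) : Q^T = Q -> \tr Q = 0 -> a != 0 ->
  annihilates Q (('X - (- (3%:R * a))%:P) * ('X - a%:P)) ->
  exists u : 'cV[R]_4, u^T *m u = 1%:M /\ Q = a *: (1%:M - 4%:R *: (u *m u^T)).
Proof.
move=> QT trQ a0 hQ.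
have r12 : - (3%:R * a) != a.
  rewrite -subr_eq0 (_ : _ - a = - (4%:R * a)); last by ring.
  by rewrite oppr_eq0 mulf_neq0 // pnatr_eq0.
have /= MM := spectral_projector r12 hQ.
set M := _ *: (Q - a%:M) in MM.
have MT : M^T = M by rewrite /M linearZ linearB /= QT tr_scalar_mx.
have trM : \tr M = 1.
  rewrite /M mxtraceZ linearB /= trQ mxtrace_scalar -mulr_natr.
  by field; rewrite subr_eq0.
have [u [Mu uu]] := rank_one_projector MT MM trM.
exists u; split => //; rewrite -Mu /M.
apply/matrixP => i j; rewrite !mxE; case: (i == j); rewrite /= ?mulr1n ?mulr0n.
all: by field; rewrite subr_eq0.
Qed.

Lemma Dmat_rank_one : Dmat = 1%:M - 4%:R *: delta_mx 0 0 :> 'M[R]_4.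
Proof.
apply/matrixP => i j; rewrite !mxE.
by case: i => [[|[|[|[|//]]]] Hi]; case: j => [[|[|[|[|//]]]] Hj];
  rewrite /= ?mulr1n ?mulr0n; ring.
Qed.

Lemma conj_Dmat (g : 'M[R]_4) (u : 'cV[R]_4) : g *m g^T = 1%:M ->
  g *m delta_mx 0 0 *m g^T = u *m u^T ->
  g *m Dmat *m g^T = 1%:M - 4%:R *: (u *m u^T).
Proof.
move=> gg ge0.
by rewrite Dmat_rank_one mulmxBr mulmx1 mulmxBl gg -scalemxAr -scalemxAl ge0.
Qed.
End NearlyKaehler.

Theorem mainTheorem7 (R : rcfType) (Q P : 'M[R]_4) :
  sym_tracefree Q -> sym_tracefree P -> \det Q < 0 ->
  (exists mu : R, mu != 0 /\ P = mu *: Q) ->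
  (exists nu : R, tf_part (\adj Q) = nu *: tf_part (P *m P)) ->
  exists (g : 'M[R]_4) (q p : R),
    [/\ in_SO4 g, q != 0, p != 0,
        Q = q *: (g *m Dmat *m g^T) & P = p *: (g *m Dmat *m g^T)].
Proof.
move=> [QT trQ] _ dQ [mu [mu0 ->]] [nu /cocoupled_adj [c hadj]].
have [b [e hq]] := quadratic_annihilator trQ (ltr0_neq0 dQ) hadj.
have [a [a0 ha]] := quadratic_annihilator_roots trQ dQ hq.
have [u [uu hQ]] := two_eigenvalue_form QT trQ a0 ha.
have [g [gg dg ge0]] := rotation_to_axis uu.
have gD := conj_Dmat gg ge0.
exists g, a, (mu * a); split => //.
- by rewrite mulf_neq0.
- by rewrite gD.
- by rewrite gD {1}hQ scalerA.
Qed.
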